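(* Let $M\ge1$, let $k\in\mathfrak{L}_M$, set $u=\min\{\mathbb{1},\tilde{k}\}$, and let $b\in\mathbb{Z}^{M+1}$ with $u\leq b\leq\min\{k,\tilde{k}\}$. Then \[ \#\left\{\mathsf{p}\in\mathsf{S}_M\,|\,(\kappa(\mathsf{p}),\beta(\mathsf{p}))=(k,b)\right\}=\binom{k}{b}\binom{\tilde{k}-u}{b-u}. \]
   Context: Fix depths $z_{-1}<z_0<\cdots<z_M$. A (reflection) scattering sequence is a finite sequence $\mathsf{p}=(\mathsf{p}_0,\ldots,\mathsf{p}_L)$ with $L\geq 2$, $\mathsf{p}_0=\mathsf{p}_L=z_{-1}$, $\mathsf{p}_i\in\{z_0,\ldots,z_M\}$ for $1\le i\le L-1$, and for every $0\le i\le L-1$ there is $-1\le j\le M-1$ with $\{\mathsf{p}_i,\mathsf{p}_{i+1}\}=\{z_j,z_{j+1}\}$; $\mathsf{S}_M$ is the set of these. For $0\le n\le M$, $k_n$ is the number of maximal runs of consecutive indices $i$ with $\mathsf{p}_i\in\{z_n,\ldots,z_M\}$, and $b_n$ the number of those runs of length at least 2; $\kappa(\mathsf{p})=(k_0,\ldots,k_M)$, $\beta(\mathsf{p})=(b_0,\ldots,b_M)$. $\mathfrak{L}_M=\{(k_0,\ldots,k_M)\in\mathbb{Z}_{\ge0}^{M+1}: k_0=1\text{ and for all }n\le M-1,\ k_n=0\Rightarrow k_{n+1}=0\}$. Notation: $\tilde{k}=(k_1,\ldots,k_M,0)$; $\mathbb{1}=(1,\ldots,1)$; $\min$, $\le$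 and subtraction entrywise; $\binom{x}{y}=\prod_{n=0}^M\binom{x_n}{y_n}$. *)

From mathcomp Require Import all_boot.
Set Implicit Arguments. Unset Strict Implicit. Unset Printing Implicit Defensive.

(* Depths z_{-1} < z_0 < ... < z_M are encoded by their index shifted by one:
   z_j  <->  j.+1  (so z_{-1} <-> 0, z_M <-> M.+1).  Since the depths are
   strictly increasing this is an order-preserving bijection, and every notion
   below depends only on the indices. *)

Definition scattering_seq (M : nat) (p : seq nat) : Prop :=
  [/\ 3 <= size p,
      nth 0 p 0 = 0,
      nth 0 p (size p).-1 = 0,
      (forall i, 0 < i < (size p).-1 -> 1 <= nth 0 p i <= M.+1) &
      (forall i, i < (size p).-1 ->
         exists j, j < M.+1 /\
           ((nth 0 p i = j /\ nth 0 p i.+1 = j.+1) \/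
            (nth 0 p i = j.+1 /\ nth 0 p i.+1 = j)))].

Fixpoint runs_aux (cur : nat) (s : seq bool) : seq nat :=
  match s with
  | [::] => if 0 < cur then [:: cur] else [::]
  | true :: s' => runs_aux cur.+1 s'
  | false :: s' => if 0 < cur then cur :: runs_aux 0 s' else runs_aux 0 s'
  end.
Definition runs (s : seq bool) : seq nat := runs_aux 0 s.

(* indicator of p_i \in {z_n,...,z_M}, i.e. shifted index >= n.+1 *)
Definition above (n : nat) (p : seq nat) : seq bool := [seq n.+1 <= x | x <- p].

Definition k_of (n : nat) (p : seq nat) : nat := size (runs (above n p)).
Definition b_of (n : nat) (p : seq nat) : nat :=
  count (fun l => 2 <= l) (runs (above n p)).

Definition kappa (M : nat) (p : seq nat) : seq nat := [seq k_of n p | n <- iota 0 M.+1].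
Definition beta (M : nat) (p : seq nat) : seq nat := [seq b_of n p | n <- iota 0 M.+1].

(* The set frak L_M, vectors as seqs of length M+1 indexed 0..M. *)
Definition in_LM (M : nat) (k : seq nat) : Prop :=
  [/\ size k = M.+1, nth 0 k 0 = 1 &
      forall n, n < M -> nth 0 k n = 0 -> nth 0 k n.+1 = 0].

Definition ktilde (k : seq nat) : seq nat := rcons (behead k) 0.

Definition le_vec (s t : seq nat) : bool := all2 leq s t.
Definition min_vec (s t : seq nat) : seq nat := [seq minn x.1 x.2 | x <- zip s t].
Definition sub_vec (s t : seq nat) : seq nat := [seq x.1 - x.2 | x <- zip s t].
Definition ones (M : nat) : seq nat := nseq M.+1 1.

Definition binom_vec (x y : seq nat) : nat := \prod_(xy <- zip x y) 'C(xy.1, xy.2).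

(* Strip the two ground points of a scattering sequence: what remains is an
   excursion, a +-1 walk in [1, M+1] leaving and returning to level 1.  An
   excursion of height h+1 is uniquely a node 1, c_1+1, 1, ..., c_m+1, 1 over
   excursions c_i of height h, and the runs of the walk above z_n are exactly
   the nodes at depth n of the resulting tree; so k_n counts the nodes at depth
   n and b_n those among them having children.  Forests with statistics (k, b)
   are thus obtained level by level: distribute the k_1 subtrees among the k_0
   roots, which is a weak composition of k_1 into k_0 parts with b_0 nonzero
   parts.  Choosing the nonzero positions and then a composition of k_1 into
   b_0 positive parts gives C(k_0, b_0) C(k_1 - u, b_0 - u) of them with
   u = min(1, k_1); the product over the levels is the formula, and k_0 = 1
   means a single tree. *)

From mathcomp Require Import all_boot.
Set Implicit Arguments. Unset Strict Implicit. Unset Printing Implicit Defensive.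

Lemma mem_map_cons (T : eqType) (x y : T) s l :
  (x :: s \in [seq y :: t | t <- l]) = (x == y) && (s \in l).
Proof. by apply/mapP/andP => [[t tl [-> ->]] | [/eqP -> sl]]; last exists s. Qed.

Lemma nil_in_map_cons (T : eqType) (y : T) l : ([::] \in [seq y :: t | t <- l]) = false.
Proof. by apply/mapP => -[]. Qed.

Fixpoint masks (a b : nat) : seq bitseq :=
  match a, b with
  | 0, 0 => [:: [::]]
  | 0, _.+1 => [::]
  | a'.+1, 0 => [seq false :: s | s <- masks a' 0]
  | a'.+1, b'.+1 => [seq true :: s | s <- masks a' b'] ++ [seq false :: s | s <- masks a' b]
  end.

Lemma mem_masks a b s : (s \in masks a b) = (size s == a) && (count id s == b).
Proof.
elim: a b s => [|a IH] [|b] [|x s] //=;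
  rewrite ?mem_cat ?nil_in_map_cons ?mem_map_cons ?IH //.
all: by case: x; rewrite /= ?add1n ?add0n ?eqSS ?orbF ?andbF.
Qed.

Lemma masks_uniq a b : uniq (masks a b).
Proof.
have cons_inj (x : bool) : injective (cons x) by move=> s t [].
elim: a b => [|a IH] [|b] //=; first by rewrite map_inj_uniq.
rewrite cat_uniq !map_inj_uniq ?IH //= andbT.
by apply/hasPn => _ /mapP [s _ ->]; rewrite mem_map_cons.
Qed.

Lemma size_masks a b : size (masks a b) = 'C(a, b).
Proof.
by elim: a b => [|a IH] [|b] //=; rewrite ?size_cat !size_map ?IH ?bin0 // addnC.
Qed.

Definition bump_head (p : seq nat) := if p is x :: p' then x.+1 :: p' else [::].

Fixpoint compositions (m b : nat) : seq (seq nat) :=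
  match m, b with
  | 0, 0 => [:: [::]]
  | m'.+1, b'.+1 => [seq 1 :: p | p <- compositions m' b'] ++
                    [seq bump_head p | p <- compositions m' b]
  | _, _ => [::]
  end.

Definition is_composition m b (p : seq nat) := [&& all (leq 1) p, size p == b & sumn p == m].

Lemma mem_map_bump_head x p l :
  (x :: p \in [seq bump_head q | q <- l]) = (0 < x) && (x.-1 :: p \in l).
Proof.
apply/mapP/andP => [[[|y q] ql //= [-> ->]] // | [x_gt0 xpl]].
by exists (x.-1 :: p); rewrite //= prednK.
Qed.

Lemma nil_in_map_bump_head l : ([::] \in [seq bump_head q | q <- l]) = ([::] \in l).
Proof. by apply/mapP/idP => [[[|y q] ql] // | nl]; exists [::]. Qed.

Lemma mem_compositions m b p : (p \in compositions m b) = is_composition m b p.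
Proof.
rewrite /is_composition; elim: m b p => [|m IH] [|b] [|x p] //=; rewrite ?inE //=.
- by rewrite andbF.
- by case: x => [|x] //=; rewrite addSn !andbF.
- by rewrite andbF.
- by rewrite mem_cat nil_in_map_cons nil_in_map_bump_head IH.
rewrite mem_cat mem_map_cons mem_map_bump_head !IH /=.
by case: x => [|[|x]] //=; rewrite orbF add1n !eqSS.
Qed.

Lemma compositions_uniq m b : uniq (compositions m b).
Proof.
elim: m b => [|m IH] [|b] //=.
rewrite cat_uniq map_inj_uniq ?IH //=; last by move=> x y [].
rewrite map_inj_in_uniq ?IH ?andbT; last first.
  by move=> [|x q] [|y r]; rewrite !mem_compositions //= => _ _ [-> ->].
apply/hasPn => z /mapP [[|y q]]; rewrite mem_compositions // => /and3P [/= /andP [y_gt0 _] _ _] ->.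
by apply/mapP => -[r _ [e _]]; move: y_gt0; rewrite e.
Qed.

Lemma size_compositionsS m b : size (compositions m.+1 b.+1) = 'C(m, b).
Proof.
elim: m b => [|m IH] b; first by rewrite /= size_cat !size_map; case: b.
rewrite [compositions _.+2 _]/= size_cat !size_map IH.
by case: b => [|b]; rewrite ?IH ?bin0 // binS addnC.
Qed.

Lemma size_compositions m b : minn 1 m <= b ->
  size (compositions m b) = 'C(m - minn 1 m, b - minn 1 m).
Proof.
case: m => [|m]; first by case: b.
by rewrite (minn_idPl _) // !subn1; case: b => [|b] // _; rewrite size_compositionsS.
Qed.

Fixpoint inflate (mask : bitseq) (p : seq nat) : seq nat :=
  match mask with
  | [::] => [::]
  | true :: mask' => head 0 p :: inflate mask' (behead p)
  | false :: mask' => 0 :: inflate mask' p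
  end.

Lemma size_inflate mask p : size (inflate mask p) = size mask.
Proof. by elim: mask p => [|[] mask IH] p //=; rewrite IH. Qed.

Lemma support_inflate mask p : count id mask = size p -> all (leq 1) p ->
  map (leq 1) (inflate mask p) = mask.
Proof.
elim: mask p => [|[] mask IH] p //=; last by move=> e p_gt0; rewrite IH.
by case: p => [|x p] //= [e] /andP [-> p_gt0]; rewrite IH.
Qed.

Lemma filter_inflate mask p : count id mask = size p -> all (leq 1) p ->
  filter (leq 1) (inflate mask p) = p.
Proof.
elim: mask p => [|[] mask IH] p //=; first by case: p.
  by case: p => [|x p] //= [e] /andP [-> p_gt0]; rewrite IH.
exact: IH.
Qed.

Lemma inflateK c : inflate (map (leq 1) c) (filter (leq 1) c) = c.
Proof. by elim: c => [|[|x] c IH] //=; rewrite IH. Qed.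

Lemma sumn_filter_gt0 c : sumn (filter (leq 1) c) = sumn c.
Proof. by elim: c => [|[|x] c IH] //=; rewrite IH. Qed.

Definition weak_compositions a m b :=
  [seq inflate mask p | mask <- masks a b, p <- compositions m b].

Definition is_weak_composition a m b (c : seq nat) :=
  [&& size c == a, sumn c == m & count (leq 1) c == b].

Lemma mem_weak_compositions a m b c :
  (c \in weak_compositions a m b) = is_weak_composition a m b c.
Proof.
rewrite /is_weak_composition; apply/allpairsP/and3P => [[[mask p] /= []] | [/eqP sc /eqP mc /eqP bc]].
  rewrite mem_masks mem_compositions => /andP [/eqP s_mask /eqP c_mask].
  move=> /and3P [p_gt0 /eqP sp /eqP mp] ->.
  have e : count id mask = size p by rewrite c_mask sp.
  rewrite size_inflate -sumn_filter_gt0 filter_inflate // -(count_map _ id).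
  by rewrite support_inflate // s_mask mp c_mask.
exists (map (leq 1) c, filter (leq 1) c); rewrite inflateK; split => //=.
  by rewrite mem_masks size_map count_map sc bc !eqxx.
by rewrite mem_compositions /is_composition filter_all size_filter sumn_filter_gt0 bc mc !eqxx.
Qed.

Lemma weak_compositions_uniq a m b : uniq (weak_compositions a m b).
Proof.
apply: allpairs_uniq; [exact: masks_uniq | exact: compositions_uniq |].
have valid u : u \in [seq (mask, p) | mask <- masks a b, p <- compositions m b] ->
    count id u.1 = size u.2 /\ all (leq 1) u.2.
  case/allpairsP => -[mask p] [/= + + ->]; rewrite mem_masks mem_compositions.
  by case/andP => _ /eqP -> /and3P [-> /eqP -> _].
move=> [mask1 p1] [mask2 p2] /valid [/= cu pu] /valid [/= cv pv] /= e.
have := support_inflate cu pu; have := filter_inflate cu pu.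
by rewrite e support_inflate // filter_inflate // => -> ->.
Qed.

Lemma size_weak_compositions a m b : minn 1 m <= b ->
  size (weak_compositions a m b) = 'C(a, b) * 'C(m - minn 1 m, b - minn 1 m).
Proof. by move=> b_ge; rewrite size_allpairs size_masks size_compositions. Qed.

Lemma runs_cat s t : runs (s ++ false :: t) = runs s ++ runs t.
Proof.
rewrite /runs; elim: s {1 2}0 => [|[] s IH] c /=; first by case: ifP.
  by rewrite IH.
by case: ifP => _; rewrite IH.
Qed.

Lemma runs_nseq n : runs (nseq n true) = if 0 < n then [:: n] else [::].
Proof.
suff aux c : runs_aux c (nseq n true) = if 0 < c + n then [:: c + n] else [::] by apply: aux.
by elim: n c => [|n IH] c /=; rewrite ?addn0 // IH addSnnS.
Qed.

Lemma cat_cons_notin_inj (T : eqType) (x : T) s1 s2 t1 t2 : x \notin s1 -> x \notin s2 ->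
  s1 ++ x :: t1 = s2 ++ x :: t2 -> s1 = s2 /\ t1 = t2.
Proof.
elim: s1 s2 => [|y s1 IH] [|z s2] /=; first by move=> _ _ [].
- by rewrite inE => _ /norP [/eqP xz _] [/xz].
- by rewrite inE => /norP [/eqP xy _] _ [/esym/xy].
by rewrite !inE => /norP [_ x_s1] /norP [_ x_s2] [-> /(IH _ x_s1 x_s2) [-> ->]].
Qed.

Lemma split_first (T : eqType) (x : T) s : x \in s ->
  exists s1 s2, s = s1 ++ x :: s2 /\ x \notin s1.
Proof.
elim: s => [|y s IH] //; rewrite inE; have [-> _ | yx /= /IH [s1 [s2 [-> x_s1]]]] := eqVneq y x.
  by exists [::], s.
by exists (y :: s1), s2; rewrite inE negb_or eq_sym yx.
Qed.

Definition unit_step (x y : nat) := (y == x.+1) || (x == y.+1).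

Definition ground_walk (t : seq nat) := path unit_step 0 (t ++ [:: 0]).

Definition excursion (h : nat) (t : seq nat) :=
  [&& t != [::], all (fun x => 0 < x <= h) t & ground_walk t].

Definition graft (cs : seq (seq nat)) := flatten [seq map succn c ++ [:: 1] | c <- cs].

Definition node (cs : seq (seq nat)) := 1 :: graft cs.

Lemma graft_cons c cs : graft (c :: cs) = map succn c ++ 1 :: graft cs.
Proof. by rewrite /graft /= -catA. Qed.

Lemma path_map_succn x c : path unit_step x.+1 (map succn c) = path unit_step x c.
Proof. by elim: c x => [|y c IH] x //=; rewrite IH /unit_step !eqSS. Qed.

Lemma ground_walk_node cs : ground_walk (node cs) = all ground_walk cs.
Proof.
rewrite /ground_walk /=; elim: cs => [|c cs IH] //=.
rewrite graft_cons -catA cat_path /= IH path_map_succn last_map cat_path /=.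
by rewrite /unit_step !eqSS !andbT andbA.
Qed.

Lemma excursion_node h cs : all (excursion h) cs -> excursion h.+1 (node cs).
Proof.
rewrite /excursion /= ground_walk_node => exc.
apply/andP; split; last by apply: sub_all exc => c /and3P [].
elim: cs exc => [|c cs IH] //= /andP [/and3P [_ c_range _] /IH].
rewrite graft_cons all_cat /= all_map => ->; rewrite andbT.
by apply: sub_all c_range => x /andP [_ x_le]; rewrite /= ltnS.
Qed.

Lemma graft_inj cs1 cs2 : all (all (leq 1)) cs1 -> all (all (leq 1)) cs2 ->
  graft cs1 = graft cs2 -> cs1 = cs2.
Proof.
have one_notin c : all (leq 1) c -> 1 \notin map succn c.
  by move=> /allP c_gt0; apply/mapP => -[[|x] /c_gt0].
elim: cs1 cs2 => [|c1 cs1 IH] [|c2 cs2] //=; rewrite ?graft_cons.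
- by case: (map succn c2).
- by case: (map succn c1).
move=> /andP [c1_gt0 /IH {}IH] /andP [c2_gt0 cs2_gt0].
case/(cat_cons_notin_inj (one_notin _ c1_gt0) (one_notin _ c2_gt0)).
by move=> /(inj_map succn_inj) -> /IH ->.
Qed.

Lemma excursion_gt0 h t : excursion h t -> all (leq 1) t.
Proof. by case/and3P => _ t_range _; apply: sub_all t_range => x /andP []. Qed.

Lemma node_inj h cs1 cs2 : all (excursion h) cs1 -> all (excursion h) cs2 ->
  node cs1 = node cs2 -> cs1 = cs2.
Proof.
move=> exc1 exc2 [/graft_inj]; apply.
  by apply: sub_all exc1 => c /excursion_gt0.
by apply: sub_all exc2 => c /excursion_gt0.
Qed.

Lemma graft_parse h w : all (fun x => 0 < x <= h.+1) w -> path unit_step 1 w -> last 1 w = 1 ->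
  exists2 cs, all (excursion h) cs & w = graft cs.
Proof.
elim: {w}_.+1 {-2}w (ltnSn (size w)) => // n IH w size_w w_range w_path w_last.
have [-> | w_nil] := eqVneq w [::]; first by exists [::].
have [e [w' [wE one_e]]] : exists e w', w = e ++ 1 :: w' /\ 1 \notin e.
  by apply: split_first; case: w w_nil w_last {size_w w_range w_path} => // x w _ <-; apply: mem_last.
rewrite {}wE in size_w w_range w_path w_last *.
move: w_range; rewrite all_cat /= => /andP [e_range w'_range].
have {}e_range : all (fun y => 0 < y.-1 <= h) e.
  apply/allP => y y_e; have := allP e_range y y_e.
  by case: y y_e => [|[|y]] // y_e; rewrite y_e in one_e.
rewrite -cat1s catA cat_path cats1 last_rcons in w_path; case/andP: w_path => e_path w'_path.
have [cs cs_exc ->] : exists2 cs, all (excursion h) cs & w' = graft cs.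
  apply: IH => //; last by rewrite last_cat in w_last.
  by rewrite size_cat /= addnS ltnS in size_w; apply: leq_trans size_w; rewrite ltnS leq_addl.
have eE : e = map succn (map predn e).
  by rewrite -map_comp map_id_in // => -[|y] /(allP e_range).
exists (map predn e :: cs); last by rewrite graft_cons -eE.
rewrite /= cs_exc andbT /excursion all_map e_range -size_eq0 size_map size_eq0.
rewrite /ground_walk -path_map_succn map_cat -eE cats1 e_path andbT.
by case: (e) e_path.
Qed.

Lemma excursion_parse h t : excursion h.+1 t -> exists2 cs, all (excursion h) cs & t = node cs.
Proof.
case: t => [|x w] //; rewrite /excursion /ground_walk /= => /and3P [/andP [_ w_range]].
move=> /orP [/eqP -> | //]; rewrite cat_path /= andbT => /andP [w_path w_last].
have w_last1 : last 1 w = 1 by case/orP: w_last => /eqP.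
have [cs cs_exc ->] := graft_parse w_range w_path w_last1.
by exists cs.
Qed.

Definition forest_k n (F : seq (seq nat)) := sumn [seq k_of n t | t <- F].
Definition forest_b n (F : seq (seq nat)) := sumn [seq b_of n t | t <- F].
Definition forest_kappa M F := [seq forest_k n F | n <- iota 0 M.+1].
Definition forest_beta M F := [seq forest_b n F | n <- iota 0 M.+1].

Lemma runs_above_graft n cs :
  runs (above n.+1 (graft cs)) = flatten [seq runs (above n c) | c <- cs].
Proof.
elim: cs => [|c cs IH] //=.
by rewrite graft_cons /above map_cat -map_comp /= -/(above _ _) runs_cat IH.
Qed.

Lemma runs_false s : runs (false :: s) = runs s.
Proof. by []. Qed.

Lemma above_node n cs : above n.+1 (node cs) = false :: above n.+1 (graft cs).
Proof. by []. Qed.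

Lemma k_of_node n cs : k_of n.+1 (node cs) = forest_k n cs.
Proof. by rewrite /k_of above_node runs_false runs_above_graft size_flatten /shape -map_comp. Qed.

Lemma b_of_node n cs : b_of n.+1 (node cs) = forest_b n cs.
Proof. by rewrite /b_of above_node runs_false runs_above_graft count_flatten -map_comp. Qed.

Lemma above0 t : all (leq 1) t -> above 0 t = nseq (size t) true.
Proof. by elim: t => [|x t IH] //= /andP [-> /IH <-]. Qed.

Lemma k_of0 t : t != [::] -> all (leq 1) t -> k_of 0 t = 1.
Proof. by rewrite -size_eq0 -lt0n => t_gt0 /above0; rewrite /k_of => ->; rewrite runs_nseq t_gt0. Qed.

Lemma b_of0 t : all (leq 1) t -> b_of 0 t = (1 < size t).
Proof. by move=> /above0; rewrite /b_of => ->; rewrite runs_nseq; case: t => [|x [|y t]]. Qed.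

Lemma forest_k0 h F : all (excursion h) F -> forest_k 0 F = size F.
Proof.
elim: F => [|t F IH] //= /andP [t_exc /IH <-].
by rewrite /forest_k /= k_of0 ?(excursion_gt0 t_exc) //; case/and3P: t_exc.
Qed.

Lemma node_gt0 cs : all (leq 1) (node cs).
Proof.
rewrite /= /node; elim: cs => [|c cs IH] //=.
by rewrite graft_cons all_cat /= IH andbT all_map; apply/allP.
Qed.

Lemma forest_k0_node css : forest_k 0 (map node css) = size css.
Proof.
rewrite /forest_k -map_comp (eq_map (fun cs => k_of0 (isT : node cs != [::]) (node_gt0 cs))).
by elim: css => //= cs css ->.
Qed.

Lemma forest_b0_node css : forest_b 0 (map node css) = count (fun cs => cs != [::]) css.
Proof.
have b0_node cs : b_of 0 (node cs) = (cs != [::]).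
  by rewrite b_of0 ?node_gt0 //; case: cs => [|c cs] //=; rewrite graft_cons size_cat addnS.
by rewrite /forest_b -map_comp (eq_map b0_node) sumn_count.
Qed.

Lemma forest_k_node n css : forest_k n.+1 (map node css) = forest_k n (flatten css).
Proof. by rewrite /forest_k -map_comp (eq_map (k_of_node n)) map_flatten sumn_flatten -map_comp. Qed.

Lemma forest_b_node n css : forest_b n.+1 (map node css) = forest_b n (flatten css).
Proof. by rewrite /forest_b -map_comp (eq_map (b_of_node n)) map_flatten sumn_flatten -map_comp. Qed.

Lemma map_iota0S (T : Type) (f : nat -> T) M :
  [seq f n | n <- iota 0 M.+1] = f 0 :: [seq f n.+1 | n <- iota 0 M].
Proof. by rewrite /= -(addn0 1) iotaDl -map_comp. Qed.

Lemma forest_kappa_node M css :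
  forest_kappa M.+1 (map node css) = size css :: forest_kappa M (flatten css).
Proof.
by rewrite /forest_kappa map_iota0S forest_k0_node; congr (_ :: _); apply: eq_map => n; rewrite forest_k_node.
Qed.

Lemma forest_beta_node M css :
  forest_beta M.+1 (map node css) = count (fun cs => cs != [::]) css :: forest_beta M (flatten css).
Proof.
by rewrite /forest_beta map_iota0S forest_b0_node; congr (_ :: _); apply: eq_map => n; rewrite forest_b_node.
Qed.

Lemma all_flatten (T : Type) (P : pred T) ss : all P (flatten ss) = all (all P) ss.
Proof. by elim: ss => //= s ss IH; rewrite all_cat IH. Qed.

Lemma excursion1 t : excursion 1 t = (t == [:: 1]).
Proof.
rewrite /excursion /ground_walk; case: t => [|[|[|x]] [|[|[|y]] t]] //=.
by rewrite /unit_step /= !andbF.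
Qed.

Lemma excursion_parse_forest h F : all (excursion h.+1) F ->
  exists2 css, all (all (excursion h)) css & F = map node css.
Proof.
elim: F => [|t F IH] /=; first by exists [::].
case/andP => /excursion_parse [cs cs_exc ->] /IH [css css_exc ->].
by exists (cs :: css); rewrite /= ?cs_exc.
Qed.

Lemma head_forest_kappa M F : head 0 (forest_kappa M F) = forest_k 0 F.
Proof. by []. Qed.

Lemma reshape_forest h c G : all (excursion h) G -> sumn c = size G ->
  [/\ flatten (reshape c G) = G, shape (reshape c G) = c & all (all (excursion h)) (reshape c G)].
Proof.
move=> G_exc sG; have flatK : flatten (reshape c G) = G by rewrite reshapeKr // sG.
by split; rewrite ?reshapeKl ?sG // -all_flatten flatK.
Qed.

Lemma count_shape_gt0 (T : eqType) (ss : seq (seq T)) :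
  count (leq 1) (shape ss) = count (fun s => s != [::]) ss.
Proof. by rewrite count_map; apply: eq_count => s; rewrite /= lt0n size_eq0. Qed.

Fixpoint forests (M : nat) (k b : seq nat) : seq (seq (seq nat)) :=
  match M with
  | 0 => if (size k == 1) && (b == [:: 0]) then [:: nseq (head 0 k) [:: 1]] else [::]
  | M'.+1 =>
      [seq map node (reshape c G) |
        c <- weak_compositions (head 0 k) (head 0 (behead k)) (head 0 b),
        G <- forests M' (behead k) (behead b)]
  end.

Lemma forest_kappa_ones n : forest_kappa 0 (nseq n [:: 1]) = [:: n].
Proof. by rewrite /forest_kappa /forest_k /=; elim: n => //= n [->]. Qed.

Lemma forest_beta_ones n : forest_beta 0 (nseq n [:: 1]) = [:: 0].
Proof. by rewrite /forest_beta /forest_b /=; elim: n. Qed.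

Lemma mem_forests0 k b F :
  F \in forests 0 k b <-> [/\ all (excursion 1) F, forest_kappa 0 F = k & forest_beta 0 F = b].
Proof.
rewrite /= (eq_all excursion1); split.
  case: ifP => // /andP [sk /eqP ->]; rewrite inE => /eqP ->.
  rewrite forest_kappa_ones forest_beta_ones; split => //; first by apply/all_pred1P; rewrite size_nseq.
  by case: k sk => [|x [|y k]].
by case=> /all_pred1P -> <- <-; rewrite forest_kappa_ones forest_beta_ones inE.
Qed.

Lemma mem_forests M k b F : F \in forests M k b <->
  [/\ all (excursion M.+1) F, forest_kappa M F = k & forest_beta M F = b].
Proof.
elim: M k b F => [|M IH] k b F; first exact: mem_forests0.
split.
  case/allpairsP => -[c G] [/= + /IH [G_exc kG bG] ->].
  rewrite mem_weak_compositions => /and3P [/eqP sc /eqP mc /eqP bc].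
  have sG : sumn c = size G by rewrite mc -kG head_forest_kappa (forest_k0 G_exc).
  have [flatK shapeK css_exc] := reshape_forest G_exc sG.
  split.
  - by apply/allP => _ /mapP [cs /(allP css_exc) cs_exc ->]; apply: excursion_node.
  - rewrite (forest_kappa_node M (reshape c G)) flatK kG size_reshape sc.
    by case: k kG {sc mc} => //; rewrite /forest_kappa.
  - rewrite forest_beta_node flatK bG -count_shape_gt0 shapeK bc.
    by case: b bG {bc} => //; rewrite /forest_beta.
case=> /excursion_parse_forest [css css_exc ->] <- <-.
have flat_exc : all (excursion M.+1) (flatten css) by rewrite all_flatten.
apply/allpairsP; exists (shape css, flatten css); split; last by rewrite /= flattenK.
  rewrite (forest_kappa_node M css) forest_beta_node mem_weak_compositions /=.
  rewrite /is_weak_composition count_shape_gt0 -size_flatten (forest_k0 flat_exc).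
  by rewrite /shape size_map !eqxx.
by apply/IH; rewrite (forest_kappa_node M css) forest_beta_node.
Qed.

Lemma map_node_inj h css1 css2 : all (all (excursion h)) css1 -> all (all (excursion h)) css2 ->
  map node css1 = map node css2 -> css1 = css2.
Proof.
elim: css1 css2 => [|cs1 css1 IH] [|cs2 css2] //= /andP [exc1 /IH {}IH] /andP [exc2 /IH {}IH].
by move=> e; rewrite (node_inj exc1 exc2 (congr1 (head [::]) e)) (IH (congr1 behead e)).
Qed.

Lemma forests_uniq M k b : uniq (forests M k b).
Proof.
elim: M k b => [|M IH] k b /=; first by case: ifP.
apply: allpairs_uniq; [exact: weak_compositions_uniq | exact: IH |].
have valid u : u \in [seq (c, G) | c <- weak_compositions (head 0 k) (head 0 (behead k)) (head 0 b),
                                   G <- forests M (behead k) (behead b)] ->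
    [/\ flatten (reshape u.1 u.2) = u.2, shape (reshape u.1 u.2) = u.1
      & all (all (excursion M.+1)) (reshape u.1 u.2)].
  case/allpairsP => -[c G] [/= + /mem_forests [G_exc kG _] ->].
  rewrite mem_weak_compositions => /and3P [_ /eqP mc _]; apply: (reshape_forest G_exc).
  by rewrite mc -kG head_forest_kappa (forest_k0 G_exc).
move=> [c1 G1] [c2 G2] /valid [/= flat1 shape1 exc1] /valid [/= flat2 shape2 exc2] /= e.
have css_eq := map_node_inj exc1 exc2 e.
by move: (congr1 shape css_eq) (congr1 flatten css_eq); rewrite flat1 flat2 shape1 shape2 => -> ->.
Qed.

Definition forest_count M k b :=
  binom_vec k b * binom_vec (sub_vec (ktilde k) (min_vec (ones M) (ktilde k)))
                            (sub_vec b (min_vec (ones M) (ktilde k))).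

Lemma binom_vec_cons x xs y ys : binom_vec (x :: xs) (y :: ys) = 'C(x, y) * binom_vec xs ys.
Proof. by rewrite /binom_vec big_cons. Qed.

Lemma forest_count_cons M k0 k1 ks b0 bs :
  forest_count M.+1 (k0 :: k1 :: ks) (b0 :: bs) =
  'C(k0, b0) * 'C(k1 - minn 1 k1, b0 - minn 1 k1) * forest_count M (k1 :: ks) bs.
Proof.
rewrite /forest_count /ktilde /= !binom_vec_cons.
by rewrite -!mulnA; congr (_ * _); rewrite mulnCA.
Qed.

Lemma size_forests M k b : size k = M.+1 -> size b = M.+1 ->
  le_vec (min_vec (ones M) (ktilde k)) b -> size (forests M k b) = forest_count M k b.
Proof.
elim: M k b => [|M IH] [|k0 [|k1 ks]] [|b0 bs] //=.
- case: bs => // _ _ _; rewrite /forest_count /= !binom_vec_cons /binom_vec !big_nil.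
  by case: b0 => [|b0]; rewrite ?bin0 ?muln0.
move=> [sk] [sb] /andP [b0_ge bs_ge].
by rewrite size_allpairs size_weak_compositions // IH //= ?sk // forest_count_cons.
Qed.

Definition pad (t : seq nat) := 0 :: t ++ [:: 0].

Lemma scattering_seq_pad M t : excursion M.+1 t -> scattering_seq M (pad t).
Proof.
case/and3P => t_nil t_range t_walk.
have size_pad : (size (pad t)).-1 = (size t).+1 by rewrite /= size_cat addn1.
have nth_range i : nth 0 (pad t) i <= M.+1.
  case: (ltnP i (size (pad t))) => [i_lt | ?]; last by rewrite nth_default.
  move: (mem_nth 0 i_lt); rewrite /pad inE mem_cat mem_seq1.
  by case/or3P => [/eqP -> | /(allP t_range)/andP [] | /eqP ->].
split; rewrite ?size_pad.
- by rewrite /= size_cat addn1 !ltnS lt0n size_eq0.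
- by [].
- by rewrite /= nth_cat ltnn subnn.
- move=> [|i] // /andP [_]; rewrite ltnS /= nth_cat => i_lt.
  by rewrite i_lt; apply/(allP t_range)/mem_nth.
move=> i i_lt; move/(pathP 0): t_walk => /(_ i); rewrite size_cat addn1 => /(_ i_lt).
have := nth_range i.+1; rewrite /unit_step [nth _ (pad t) i.+1]/=.
case: eqP => [-> x_lt _ | _ _ /eqP x_eq].
  by exists (nth 0 (pad t) i); split; [| left].
by exists (nth 0 (t ++ [:: 0]) i); split; [rewrite -x_eq; apply: nth_range | right].
Qed.

Lemma scattering_seq_unpad M p : scattering_seq M p -> exists2 t, excursion M.+1 t & p = pad t.
Proof.
case: p => [|x p] [//= size_p /= -> p_last p_range p_step].
case/lastP: p size_p p_last p_range p_step => [|t y] //; rewrite size_rcons /= => size_t.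
rewrite nth_rcons ltnn eqxx => -> t_range t_step; exists t; last by rewrite /pad cats1.
apply/and3P; split; first by case: (t) size_t.
  apply/(all_nthP 0) => i i_lt; have := t_range i.+1; rewrite /= nth_rcons i_lt.
  by apply; rewrite ltnS.
apply/(pathP 0) => i; rewrite size_cat addn1 cats1 => /t_step [j [_]].
by case=> -[-> ->]; rewrite /unit_step eqxx ?orbT.
Qed.

Lemma pad_inj : injective pad.
Proof. by move=> t1 t2 [] /eqP; rewrite !cats1 eqseq_rcons andbT => /eqP. Qed.

Lemma runs_above_pad n t : runs (above n (pad t)) = runs (above n t).
Proof. by rewrite /pad /above /= runs_false map_cat runs_cat cats0. Qed.

Lemma kappa_pad M t : kappa M (pad t) = forest_kappa M [:: t].
Proof. by apply: eq_map => n; rewrite /forest_k /= addn0 /k_of runs_above_pad. Qed.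

Lemma beta_pad M t : beta M (pad t) = forest_beta M [:: t].
Proof. by apply: eq_map => n; rewrite /forest_b /= addn0 /b_of runs_above_pad. Qed.

Lemma forests_single M k b F : head 0 k = 1 -> F \in forests M k b -> F = [:: head [::] F].
Proof.
move=> k_head /mem_forests [F_exc kF _].
have : size F = 1 by rewrite -(forest_k0 F_exc) -(head_forest_kappa M) kF.
by case: F {F_exc kF} => [|t [|? ?]].
Qed.

Theorem lemma2 (M : nat) (k b : seq nat) :
  1 <= M ->
  in_LM M k ->
  size b = M.+1 ->
  le_vec (min_vec (ones M) (ktilde k)) b ->
  le_vec b (min_vec k (ktilde k)) ->
  exists s : seq (seq nat),
    [/\ uniq s,
        (forall p, p \in s <-> (scattering_seq M p /\ kappa M p = k /\ beta M p = b)) &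
        size s = binom_vec k b *
                 binom_vec (sub_vec (ktilde k) (min_vec (ones M) (ktilde k)))
                           (sub_vec b (min_vec (ones M) (ktilde k)))].
Proof.
move=> _ [size_k k_head _] size_b b_ge _.
have single F : F \in forests M k b -> F = [:: head [::] F] := forests_single k_head.
exists [seq pad (head [::] F) | F <- forests M k b]; split.
- by rewrite map_inj_in_uniq ?forests_uniq // => F1 F2 /single {2}-> /single {2}-> /pad_inj ->.
- move=> p; split.
    case/mapP => F F_in ->; have := F_in; rewrite {1}(single F F_in).
    case/mem_forests => /= /andP [t_exc _] kF bF.
    by rewrite kappa_pad beta_pad kF bF; split; first exact: scattering_seq_pad.
  case=> /scattering_seq_unpad [t t_exc ->] [kp bp].
  apply/mapP; exists [:: t] => //; apply/mem_forests.
  by rewrite -kappa_pad -beta_pad kp bp /= t_exc.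
- by rewrite size_map size_forests.
Qed.
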